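(* Let $\mathcal{L}$ be a distributive abstract logic and $a,b\in Expr_{\mathcal{L}}$. Then ($a\le b$ and $b\le a$) holds if and only if ($a\Vdash_{\mathcal{L}} b$ and $b\Vdash_{\mathcal{L}} a$).
   Context: An abstract logic is a triple $\mathcal{L}=(Expr_{\mathcal{L}},Th_{\mathcal{L}},\mathcal{C}_{\mathcal{L}})$ where $Expr_{\mathcal{L}}$ is a set, $Th_{\mathcal{L}}$ a non-empty set of subsets of $Expr_{\mathcal{L}}$ (theories) closed under intersections of non-empty subfamilies, and $\mathcal{C}_{\mathcal{L}}$ a set of operations on $Expr_{\mathcal{L}}$. $\mathcal{L}$ is closed under union of chains if the union of every non-empty chain of theories is a theory. A theory $T$ is prime if $T=\bigcap\mathcal{T}$ with $\mathcal{T}\subseteq Th_{\mathcal{L}}$ non-empty finite implies $T\in\mathcal{T}$; totally prime if this holds for non-empty $\mathcal{T}$ of any size. $PTh_{\mathcal{L}}$, $TPTh_{\mathcal{L}}$ denote these sets. A distributive abstract logic is one closed under union of chains with binary connectives $\vee,\wedge$ such that for all $a,b$ and all $T\in TPTh_{\mathcal{L}}$: $a\vee b\in T$ iff $a\in T$ or $b\in T$; $a\wedge b\in T$ iff $a,b\in T$. The consequence relation: for $A\cup\{a\}\subseteq Expr_{\mathcal{L}}$, $A\Vdash_{\mathcal{L}} a$ iff $a\in\bigcap\{T\in Th_{\mathcal{L}}: A\subseteq T\}$ (write $b\Vdash_{\mathcal{L}}a$ for $\{b\}\Vdash_{\mathcal{L}}a$). The order: $a\le b$ iff $S_a\subseteq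 S_b$, where $S_a=\{P\in PTh_{\mathcal{L}}: a\in P\}$. *)

From Stdlib Require Import List.
From Stdlib Require Vectors.Fin.

Set Implicit Arguments.

Definition bigcap (E : Type) (F : (E -> Prop) -> Prop) : E -> Prop :=
  fun x => forall T, F T -> T x.

Definition bigcup (E : Type) (F : (E -> Prop) -> Prop) : E -> Prop :=
  fun x => exists T, F T /\ T x.

Definition subset (E : Type) (A B : E -> Prop) : Prop := forall x, A x -> B x.

Definition operation (E : Type) := { n : nat & (Fin.t n -> E) -> E }.

Definition binop_as_operation (E : Type) (f : E -> E -> E) : operation E :=
  existT (fun n => (Fin.t n -> E) -> E) 2
    (fun v => f (v Fin.F1) (v (Fin.FS Fin.F1))).

Record abstract_logic := {
  Expr : Type;
  Th : (Expr -> Prop) -> Prop;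
  Conn : operation Expr -> Prop;
  Th_nonempty : exists T, Th T;
  Th_closed_bigcap : forall F : (Expr -> Prop) -> Prop,
      (exists T, F T) -> (forall T, F T -> Th T) -> Th (bigcap F)
}.

Definition finite_family (E : Type) (F : (E -> Prop) -> Prop) : Prop :=
  exists l : list (E -> Prop), forall T, F T <-> In T l.

Definition prime_theory (L : abstract_logic) (T : Expr L -> Prop) : Prop :=
  Th L T /\
  forall F : (Expr L -> Prop) -> Prop,
    (exists U, F U) -> finite_family F -> (forall U, F U -> Th L U) ->
    T = bigcap F -> F T.

Definition totally_prime_theory (L : abstract_logic) (T : Expr L -> Prop) : Prop :=
  Th L T /\
  forall F : (Expr L -> Prop) -> Prop,
    (exists U, F U) -> (forall U, F U -> Th L U) ->
    T = bigcap F -> F T.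

Definition is_chain (E : Type) (F : (E -> Prop) -> Prop) : Prop :=
  forall A B, F A -> F B -> subset A B \/ subset B A.

Definition closed_under_union_of_chains (L : abstract_logic) : Prop :=
  forall F : (Expr L -> Prop) -> Prop,
    (exists U, F U) -> (forall U, F U -> Th L U) -> is_chain F ->
    Th L (bigcup F).

Definition distributive (L : abstract_logic) (vee wedge : Expr L -> Expr L -> Expr L) : Prop :=
  closed_under_union_of_chains L /\
  Conn L (binop_as_operation vee) /\ Conn L (binop_as_operation wedge) /\
  (forall (a b : Expr L) T, totally_prime_theory L T ->
     (T (vee a b) <-> T a \/ T b) /\ (T (wedge a b) <-> T a /\ T b)).

Definition entails (L : abstract_logic) (A : Expr L -> Prop) (a : Expr L) : Prop :=
  bigcap (fun T => Th L T /\ subset A T) a.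

Definition entails1 (L : abstract_logic) (b a : Expr L) : Prop :=
  entails L (fun x => x = b) a.

Definition S_of (L : abstract_logic) (a : Expr L) : (Expr L -> Prop) -> Prop :=
  fun P => prime_theory L P /\ P a.

Definition le_expr (L : abstract_logic) (a b : Expr L) : Prop :=
  subset (S_of L a) (S_of L b).

(* If a ≤ b but some theory T contains a and not b, Zorn's lemma (available
   because unions of chains of theories are theories) extends T to a theory M
   maximal among those omitting b.  Such an M is prime, even totally prime: if
   M is the intersection of a family of theories, each member not equal to M
   strictly extends M and hence contains b, so b would lie in M.  Thus M ∈ S_a
   but M ∉ S_b.  Conversely, if a ⊩ b then every prime theory containing a
   contains b. *)

From Pilot Require Import Defs.
From Stdlib Require Import Classical.
From mathcomp Require Import ssreflect ssrbool classical_sets.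

Set Implicit Arguments.
Unset Strict Implicit.

Local Open Scope classical_set_scope.

Section MaximalTheories.

Variable L : abstract_logic.

Definition maximal_theory_omitting (b : Expr L) (M : Expr L -> Prop) : Prop :=
  [/\ Th L M, ~ M b &
      forall N, Th L N -> Defs.subset M N -> ~ N b -> N = M].

Lemma totally_prime_theory_prime (T : Expr L -> Prop) :
  totally_prime_theory L T -> prime_theory L T.
Proof. by case=> ThT primeT; split=> // F Fne _; exact: primeT. Qed.

Lemma maximal_theory_omitting_totally_prime (b : Expr L) (M : Expr L -> Prop) :
  maximal_theory_omitting b M -> totally_prime_theory L M.
Proof.
case=> ThM Mb Mmax; split=> // F _ FTh defM.
apply: NNPP => FM; apply: Mb; rewrite defM => U FU.
apply: NNPP => Ub.
have MU : Defs.subset M U by move=> x; rewrite defM; exact.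
by apply: FM; rewrite -(Mmax U (FTh U FU) MU Ub).
Qed.

Hypothesis chainL : closed_under_union_of_chains L.

Section ExtensionsOmitting.

Variables (T : Expr L -> Prop) (b : Expr L).

Definition theory_extension_omitting (X : Expr L -> Prop) : Prop :=
  [/\ Th L X, Defs.subset T X & ~ X b].

(* The empty chain has union set0, which need not be a theory; admitting set0
   into the family is what makes Zorn's lemma applicable. *)
Lemma bigcup_chain_extension_omitting (F : set (set (Expr L))) :
  (forall X, F X -> X = set0 \/ theory_extension_omitting X) ->
  total_on F subset ->
  let U := \bigcup_(X in F) X in U = set0 \/ theory_extension_omitting U.
Proof.
move=> FP Ftot /=.
have [[U [FU Une]]|Fempty] := classic (exists U, F U /\ U <> set0); last first.
  left; apply/seteqP; split=> [y [X FX Xy]|//].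
  by apply: Fempty; exists X; split=> // X0; rewrite X0 in Xy.
pose F' X := F X /\ X <> set0.
have F'ext X : F' X -> theory_extension_omitting X.
  by case=> FX Xne; case: (FP X FX).
have -> : \bigcup_(X in F) X = Defs.bigcup F'.
  apply/seteqP; split=> [y [X FX Xy]|y [X [[FX _] Xy]]]; last by exists X.
  by exists X; split=> //; split=> // X0; rewrite X0 in Xy.
right; split.
- apply: chainL; first by exists U.
    by move=> X /F'ext [].
  by move=> X Y [FX _] [FY _]; exact: Ftot.
- by move=> y Ty; exists U; have [_ /(_ y Ty)] := F'ext U (conj FU Une).
- by case=> X [/F'ext [_ _ Xb] /Xb].
Qed.

Lemma exists_maximal_theory_omitting :
  Th L T -> ~ T b -> (exists x, T x) ->
  exists M, Defs.subset T M /\ maximal_theory_omitting b M.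
Proof.
move=> ThT Tb [x Tx].
have [A [PA Amax]] : exists A, (A = set0 \/ theory_extension_omitting A) /\
    forall B, A `<` B -> ~ (B = set0 \/ theory_extension_omitting B).
  exact/Zorn_bigcup/bigcup_chain_extension_omitting.
have extT : theory_extension_omitting T by split=> // y.
have [ThA TA Ab] : theory_extension_omitting A.
  case: PA => [A0|//]; exfalso; apply: (Amax T); last by right.
  by rewrite A0; split=> [y []|/(_ x Tx)].
exists A; split=> //; split=> // N ThN AN Nb.
apply: NNPP => NA; apply: (Amax N); last by right; split=> // y /TA /AN.
by split=> // NA'; apply: NA; apply/seteqP.
Qed.

End ExtensionsOmitting.

Lemma le_expr_entails1 (a b : Expr L) : le_expr L a b -> entails1 L a b.
Proof.
move=> le_ab T [ThT aT]; apply: NNPP => Tb.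
have Ta : T a by exact: aT.
have [M [TM maxM]] := exists_maximal_theory_omitting ThT Tb (ex_intro _ a Ta).
have primeM := totally_prime_theory_prime (maximal_theory_omitting_totally_prime maxM).
case: maxM => _ Mb _.
by apply: Mb; case: (le_ab M (conj primeM (TM a Ta))).
Qed.

End MaximalTheories.

Lemma entails1_le_expr (L : abstract_logic) (a b : Expr L) :
  entails1 L a b -> le_expr L a b.
Proof.
move=> ab P [primeP Pa]; split=> //.
by apply: ab; split; [case: primeP | move=> x ->].
Qed.

Theorem lemma3p10 (L : abstract_logic) (vee wedge : Expr L -> Expr L -> Expr L)
  (HL : distributive L vee wedge) (a b : Expr L) :
  (le_expr L a b /\ le_expr L b a) <-> (entails1 L a b /\ entails1 L b a).
Proof.
have [chainL _] := HL.
by split=> -[H1 H2]; split;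
  solve [exact: le_expr_entails1 | exact: entails1_le_expr].
Qed.
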